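(* Let $n\ge 1$, let $\mu,\nu\in\mathbb{R}^n$ be probability vectors, let $\gamma>0$, and let $\phi$ satisfy the Bregman assumption stated in the context. Then for every $\hat X\in\mathcal{T}_\phi(\mu,\nu)$ there exists $C\in\mathbb{R}_+^{n\times n}$ with $\mathcal{F}(C)=\hat X$; that is, the map $\mathcal{F}:\mathbb{R}_+^{n\times n}\to\mathcal{T}_\phi(\mu,\nu)$ is a surjection.
   Context: Probability vectors are vectors with nonnegative entries summing to $1$. $\mathcal{U}(\mu,\nu):=\{X\in\mathbb{R}_+^{n\times n}: X\mathbf{1}=\mu,\ X^\top\mathbf{1}=\nu\}$. Bregman assumption on $\phi:\mathbb{R}\to(-\infty,+\infty]$: its effective domain $I=\operatorname{dom}\phi$ is an interval with $(0,1)\subseteq\operatorname{int}(I)$; $\phi$ is of Legendre type (proper, closed, strictly convex on $\operatorname{int}(\operatorname{dom}\phi)$, and essentially smooth, i.e. differentiable on the nonempty interior of its domain with $|\phi'(x_k)|\to\infty$ whenever $x_k\in\operatorname{int}(\operatorname{dom}\phi)$ converges to a boundary point of the domain); and $\phi$ is $C^1$ on $\operatorname{int}(I)$. For a matrix $X$ with entries in $I$, $\phi(X):=\sum_{i,j}\phi(X_{ij})$. For a cost matrix $C$, $\mathcal{F}(C):=\arg\min_{X\in\mathcal{U}(\mu,\nu)}\{\langle C,X\rangle+\gamma\phi(X)\}$ (the unique minimizer). Set $\phi'_0:=\lim_{x\to0^+}\phi'(x)$ and $\phi'_1:=\lim_{x\to1^-}\phi'(x)$, with values in $[-\infty,+\infty]$.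 The target set is $\mathcal{T}_\phi(\mu,\nu):=\mathcal{U}(\mu,\nu)$ if $\phi'_0,\phi'_1$ are both finite; $\mathcal{U}(\mu,\nu)\cap(0,1]^{n\times n}$ if $\phi'_0=-\infty$ and $\phi'_1$ is finite; $\mathcal{U}(\mu,\nu)\cap[0,1)^{n\times n}$ if $\phi'_0$ is finite and $\phi'_1=+\infty$; $\mathcal{U}(\mu,\nu)\cap(0,1)^{n\times n}$ if $\phi'_0=-\infty$ and $\phi'_1=+\infty$. *)

From HB Require Import structures.
From mathcomp Require Import all_boot all_order all_algebra.
From mathcomp Require Import all_classical all_reals all_analysis.
Set Implicit Arguments. Unset Strict Implicit. Unset Printing Implicit Defensive.
Import Order.TTheory GRing.Theory Num.Theory.
Import numFieldNormedType.Exports.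
Local Open Scope classical_set_scope.
Local Open Scope ring_scope.

Section Defs.
Variable R : realType.

Definition prob_vec (n : nat) (mu : 'I_n -> R) : Prop :=
  (forall i, 0 <= mu i) /\ \sum_(i < n) mu i = 1.

Definition transport_polytope (n : nat) (mu nu : 'I_n -> R) : set 'M[R]_n :=
  [set X | (forall i j, 0 <= X i j) /\
           (forall i, \sum_(j < n) X i j = mu i) /\
           (forall j, \sum_(i < n) X i j = nu j)].

Definition nonneg_mx (n : nat) (C : 'M[R]_n) : Prop := forall i j, 0 <= C i j.

(* phi : R -> (-oo, +oo], modelled as R -> \bar R. *)
Definition edom (phi : R -> \bar R) : set R := [set x | (phi x < +oo)%E].

(* The real-valued restriction of phi (meaningful on dom phi) and its derivative. *)
Definition phir (phi : R -> \bar R) : R -> R := fun x => fine (phi x).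
Definition dphi (phi : R -> \bar R) : R -> R := derive1 (phir phi).

Definition is_interval_set (I : set R) : Prop :=
  forall x y z, I x -> I y -> x <= z -> z <= y -> I z.

Definition proper_fun (phi : R -> \bar R) : Prop :=
  (forall x, phi x != -oo%E) /\ (exists x, edom phi x).

(* extended-valued convexity on R (convention 0 * (+oo) = 0) *)
Definition econvex (phi : R -> \bar R) : Prop :=
  forall x y t : R, (0 <= t)%R -> (t <= 1)%R ->
    (phi (t * x + (1 - t) * y)%R <= t%:E * phi x + (1 - t)%R%:E * phi y)%E.

Definition strictly_convex_on (phi : R -> \bar R) (D : set R) : Prop :=
  forall x y t : R, D x -> D y -> x != y -> (0 < t)%R -> (t < 1)%R ->
    (phi (t * x + (1 - t) * y)%R < t%:E * phi x + (1 - t)%R%:E * phi y)%E.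

Definition essentially_smooth (phi : R -> \bar R) : Prop :=
  (interior (edom phi) !=set0) /\
  (forall x, interior (edom phi) x -> derivable (phir phi) x 1) /\
  (forall (u : R^nat) (b : R),
      (forall k, interior (edom phi) (u k)) ->
      closure (edom phi) b -> ~ interior (edom phi) b ->
      u @ \oo --> b ->
      (fun k => `|dphi phi (u k)|) @ \oo --> +oo).

Definition legendre (phi : R -> \bar R) : Prop :=
  [/\ proper_fun phi, lower_semicontinuous phi, econvex phi,
      strictly_convex_on phi (interior (edom phi)) & essentially_smooth phi].

Definition bregman_assumption (phi : R -> \bar R) : Prop :=
  [/\ is_interval_set (edom phi),
      `]0, 1[ `<=` interior (edom phi),
      legendre phi &
      (forall x, interior (edom phi) x -> {for x, continuous (dphi phi)})].

Definition objective (n : nat) (phi : R -> \bar R) (gamma : R) (C X : 'M[R]_n)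
  : \bar R :=
  ((\sum_(i < n) \sum_(j < n) C i j * X i j)%:E +
   gamma%:E * \sum_(i < n) \sum_(j < n) phi (X i j))%E.

(* "F(C) = X": X is the unique minimizer of the objective over U(mu,nu). *)
Definition is_F (n : nat) (phi : R -> \bar R) (gamma : R) (mu nu : 'I_n -> R)
  (C X : 'M[R]_n) : Prop :=
  transport_polytope mu nu X /\
  (forall Y, transport_polytope mu nu Y ->
     (objective phi gamma C X <= objective phi gamma C Y)%E) /\
  (forall Y, transport_polytope mu nu Y ->
     (forall Z, transport_polytope mu nu Z ->
        (objective phi gamma C Y <= objective phi gamma C Z)%E) ->
     Y = X).

Definition dphi0_finite (phi : R -> \bar R) : Prop :=
  exists L : R, dphi phi x @[x --> 0^'+] --> L.
Definition dphi0_minfty (phi : R -> \bar R) : Prop :=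
  dphi phi x @[x --> 0^'+] --> -oo.
Definition dphi1_finite (phi : R -> \bar R) : Prop :=
  exists L : R, dphi phi x @[x --> 1^'-] --> L.
Definition dphi1_pinfty (phi : R -> \bar R) : Prop :=
  dphi phi x @[x --> 1^'-] --> +oo.

Definition target_set (n : nat) (phi : R -> \bar R) (mu nu : 'I_n -> R) : set 'M[R]_n :=
  [set X | transport_polytope mu nu X /\
   [\/ dphi0_finite phi /\ dphi1_finite phi,
       [/\ dphi0_minfty phi, dphi1_finite phi & forall i j, 0 < X i j <= 1],
       [/\ dphi0_finite phi, dphi1_pinfty phi & forall i j, 0 <= X i j < 1] |
       [/\ dphi0_minfty phi, dphi1_pinfty phi & forall i j, 0 < X i j < 1]]].

End Defs.

From mathcomp Require Import all_boot all_order all_algebra.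
From mathcomp Require Import all_classical all_reals all_analysis.
From mathcomp Require Import ring lra.
Import Order.TTheory GRing.Theory Num.Theory.
Import numFieldNormedType.Exports.
Local Open Scope classical_set_scope.
Local Open Scope ring_scope.

(* Take C := M - gamma * phi'(Xhat) entrywise, with M large enough that
   C >= 0.  On U(mu, nu) the constant M contributes the fixed amount
   M * sum_i mu_i, and the remaining terms rearrange into
     <C, Y> + gamma phi(Y) = const + gamma * sum_ij D_phi(Y_ij, Xhat_ij),
   where D_phi(y, x) = phi(y) - phi(x) - phi'(x) (y - x) is the Bregman
   divergence.  It is nonnegative by convexity and vanishes only at y = x by
   strict convexity, so Xhat is the unique minimiser.  This needs every
   Xhat_ij in int(dom phi), which is what the target set guarantees: an
   entry may equal 0 (resp. 1) only when phi'_0 (resp. phi'_1) is finite, and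
   essential smoothness then forces 0 (resp. 1) into int(dom phi). *)

Lemma ler_sum_term {R : numDomainType} {I : finType} {F : I -> R} i :
  (forall j, 0 <= F j) -> F i <= \sum_j F j.
Proof. by move=> F0; rewrite (bigD1 i) //= lerDl sumr_ge0. Qed.

Section BregmanDivergence.
Context {R : realType}.
Variable phi : R -> \bar R.
Hypothesis phiB : bregman_assumption phi.

Let phi_proper : proper_fun phi. Proof. by case: phiB => _ _ []. Qed.
Let phi_convex : econvex phi. Proof. by case: phiB => _ _ []. Qed.
Let phi_strictly_convex : strictly_convex_on phi (interior (edom phi)).
Proof. by case: phiB => _ _ []. Qed.
Let phi_smooth : essentially_smooth phi. Proof. by case: phiB => _ _ []. Qed.

Lemma phirK {z : R} : edom phi z -> (phir phi z)%:E = phi z.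
Proof.
move=> /lt_eqF zfin; rewrite /phir fineK // fin_numE zfin andbT.
exact: phi_proper.1.
Qed.

Definition tangent (x y : R) : R := phir phi x + dphi phi x * (y - x).

Lemma phi_ge_tangent x y : interior (edom phi) x -> ((tangent x y)%:E <= phi y)%E.
Proof.
move=> xint; have xdom : edom phi x by exact: interior_subset.
case Ey : (phi y) => [py| |]; last 2 first.
- by rewrite leey.
- by have := phi_proper.1 y; rewrite Ey.
set f := phir phi; set v := y - x.
have chord t : 0 < t -> t <= 1 ->
    t^-1 *: ((f \o shift x) (t *: v) - f x) <= py - f x.
  move=> t0 t1; have := phi_convex y x t (ltW t0) t1.
  rewrite Ey -(phirK xdom) -!EFinM -EFinD.
  have -> : t * y + (1 - t) * x = t *: v + x by rewrite /v /GRing.scale /=; ring.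
  move=> ineq; have tdom : edom phi (t *: v + x).
    by apply: le_lt_trans ineq _; exact: ltry.
  move: ineq; rewrite -(phirK tdom) lee_fin -/f => ineq.
  rewrite /= /GRing.scale /= ler_pdivrMl // -/f.
  change (t *: v) with (t * v) in ineq; lra.
have fdiff : differentiable f x.
  by apply/derivable1_diffP; case: phi_smooth => _ [+ _]; apply.
have Dv : 'D_v f x = v * dphi phi x.
  by rewrite deriveE // /dphi derive1E' // -linearZ /= [v *: 1]mulr1.
have quot_cvg :
    (fun h => h^-1 *: ((f \o shift x) (h *: v) - f x)) @ 0^'+ --> 'D_v f x.
  by apply: cvg_dnbhs_at_right; exact: diff_derivable.
have : 'D_v f x <= py - f x.
  apply: (cvgr_to_le quot_cvg).
  near=> t; apply: chord; near: t; [exact: nbhs_right_gt | exact: nbhs_right_ltW].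
by rewrite Dv lee_fin /tangent -/f -/v; lra.
Unshelve. all: by end_near.
Qed.

Lemma phi_eq_tangent_segment {x y} t : interior (edom phi) x ->
  phi y = (tangent x y)%:E -> 0 <= t <= 1 ->
  phi (t * (y - x) + x) = (tangent x (t * (y - x) + x))%:E.
Proof.
move=> xint yE /andP[t0 t1]; apply/le_anti; rewrite phi_ge_tangent // andbT.
have := phi_convex y x t t0 t1.
rewrite yE -(phirK (interior_subset xint)) -!EFinM -EFinD /tangent.
have -> : t * y + (1 - t) * x = t * (y - x) + x by ring.
move=> /le_trans; apply; rewrite lee_fin; lra.
Qed.

Lemma phi_eq_tangent x y : interior (edom phi) x ->
  phi y = (tangent x y)%:E -> y = x.
Proof.
(* Equality propagates along the segment [x, y]; strict convexity on the part
   of that segment inside int(dom phi) then breaks it. *)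
move=> xint yE; apply/eqP/negPn/negP => yx.
have v0 : 0 < `|y - x| by rewrite normr_gt0 subr_eq0.
have [e e0 ballS] : exists2 e : R, 0 < e & ball x e `<=` interior (edom phi).
  by apply/nbhs_ballP; move: xint; apply: (open_interior (edom phi)).
set t := e / (e + `|y - x|).
have t0 : 0 < t by rewrite divr_gt0 // addr_gt0.
have t1 : t < 1 by rewrite ltr_pdivrMr ?addr_gt0 // mul1r ltrDl.
set p := t * (y - x) + x; set m := t / 2 * (y - x) + x.
have pint : interior (edom phi) p.
  apply: ballS; rewrite -ball_normE /= /p opprD addrCA subrr addr0.
  rewrite normrN normrM gtr0_norm //.
  by rewrite /t mulrAC ltr_pdivrMr ?addr_gt0 // mulrDr ltrDr mulr_gt0.
have px : p != x.
  by rewrite /p -subr_eq0 addrK mulf_neq0 ?(gt_eqF t0) // subr_eq0.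
have pE := phi_eq_tangent_segment t xint yE.
have mE := phi_eq_tangent_segment (t / 2) xint yE.
have := phi_strictly_convex p x 2^-1 pint xint px.
rewrite invr_gt0 ltr0n invf_lt1 ?ltr1n // => /(_ isT isT).
have -> : 2^-1 * p + (1 - 2^-1) * x = m by rewrite /p /m; field.
rewrite mE ?pE -?(phirK (interior_subset xint)); try by apply/andP; split; lra.
rewrite -!EFinM -EFinD lte_fin /tangent; lra.
Qed.

(* [bregman_div x y] is D_phi(y, x); it is [+oo] when [y] lies outside
   dom phi. *)
Definition bregman_div (x y : R) : \bar R := (phi y - (tangent x y)%:E)%E.

Lemma bregman_divK x y : ((tangent x y)%:E + bregman_div x y)%E = phi y.
Proof. by rewrite addeC subeK. Qed.

Lemma bregman_div_ge0 x y : interior (edom phi) x -> (0 <= bregman_div x y)%E.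
Proof. by move=> xint; rewrite sube_ge0 ?phi_ge_tangent. Qed.

Lemma bregman_div_eq0 {x y} : interior (edom phi) x ->
  (bregman_div x y = 0)%E <-> y = x.
Proof.
move=> xint; split=> [yx|->].
  by apply: phi_eq_tangent => //; rewrite -(bregman_divK x) yx adde0.
rewrite /bregman_div /tangent subrr mulr0 addr0.
by rewrite -(phirK (interior_subset xint)) subee.
Qed.

Lemma interior_edom_of_cvg_dphi (u : R^nat) (b L : R) : (forall k, 0 < u k < 1) ->
  u @ \oo --> b -> dphi phi \o u @ \oo --> L -> interior (edom phi) b.
Proof.
move=> u01 ub duL; have [//|bNint] := pselect (interior (edom phi) b).
have uint k : interior (edom phi) (u k).
  by case: phiB => _ + _ _; apply; rewrite /= in_itv /=.
have bcl : closure (edom phi) b.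
  apply: (closed_cvg _ (@closed_closure _ (edom phi))) ub.
  by apply: nearW => k; apply: subset_closure; apply: interior_subset.
have [M duM] := (ex_bound (dphi phi \o u)).1 (cvg_bounded _ _ duL).
have := phi_smooth.2.2 u b uint bcl bNint ub.
move=> /cvgryPge/(_ (M + 1)) duM1.
have [k /= [duk Mduk]] := filter_ex (filterI duM duM1).
by move: duk Mduk; lra.
Qed.

Let half_harmonic_itv k : 0 < @harmonic R k / 2 < 1.
Proof.
have h0 : 0 < harmonic k :> R by exact: harmonic_gt0.
have h1 : harmonic k <= 1 :> R by rewrite /= invf_le1 ?ler1n ?ltr0n.
by apply/andP; split; lra.
Qed.

Let cvg_half_harmonic : (fun k => @harmonic R k / 2) @ \oo --> (0 : R).
Proof. by rewrite -(mul0r 2^-1); exact: cvgM cvg_harmonic (cvg_cst _). Qed.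

Lemma interior_edom0 : dphi0_finite phi -> interior (edom phi) 0.
Proof.
move=> [L dL].
apply: (interior_edom_of_cvg_dphi _ _ L half_harmonic_itv cvg_half_harmonic).
apply: (cvg_at_rightP (dphi phi) 0 L).1 dL _ (conj _ cvg_half_harmonic) => k.
by case/andP: (half_harmonic_itv k).
Qed.

Lemma interior_edom1 : dphi1_finite phi -> interior (edom phi) 1.
Proof.
move=> [L dL]; pose u k : R := 1 - harmonic k / 2.
have u01 k : 0 < u k < 1.
  by have := half_harmonic_itv k; rewrite /u => /andP[? ?]; apply/andP; split; lra.
have u1 : u @ \oo --> (1 : R).
  rewrite -[X in _ --> X](subr0 1).
  by apply: cvgB; [exact: cvg_cst | exact: cvg_half_harmonic].
apply: (interior_edom_of_cvg_dphi _ _ L u01 u1).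
apply: (cvg_at_leftP (dphi phi) 1 L).1 dL _ (conj _ u1) => k.
by case/andP: (u01 k).
Qed.
End BregmanDivergence.

Section TransportPolytope.
Context {R : realType} {n : nat} {mu nu : 'I_n -> R}.

Lemma transport_polytope_mass {Y} : transport_polytope mu nu Y ->
  \sum_i \sum_j Y i j = \sum_i mu i.
Proof. by move=> [_ [Yrow _]]; apply: eq_bigr => i _; exact: Yrow. Qed.

Lemma transport_polytope_le1 {Y} i j : prob_vec mu -> transport_polytope mu nu Y ->
  Y i j <= 1.
Proof.
move=> [mu0 mu1] [Y0 [Yrow _]]; apply: le_trans (ler_sum_term j (Y0 i)) _.
by rewrite Yrow -mu1; exact: ler_sum_term.
Qed.

Lemma target_set_interior {phi X} : bregman_assumption phi -> prob_vec mu ->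
  target_set phi mu nu X -> forall i j, interior (edom phi) (X i j).
Proof.
move=> phiB muP [XP Xcase] i j.
have X0 : 0 <= X i j by case: XP.
have X1 := transport_polytope_le1 i j muP XP.
have [Xij0|Xn0] := eqVneq (X i j) 0.
  rewrite Xij0; apply: (interior_edom0 _ phiB).
  by case: Xcase => [[]|[_ _ /(_ i j)]|[]|[_ _ /(_ i j)]] //; rewrite Xij0 ltxx.
have [Xij1|Xn1] := eqVneq (X i j) 1.
  rewrite Xij1; apply: (interior_edom1 _ phiB).
  case: Xcase => [[]|[]|[_ _ /(_ i j)]|[_ _ /(_ i j)]] //;
    by rewrite Xij1 ltxx andbF.
case: phiB => _ + _ _; apply; rewrite /= in_itv /=.
by rewrite !lt_neqAle eq_sym Xn0 Xn1 X0 X1.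
Qed.

End TransportPolytope.

Section TangentCost.
Context {R : realType} {n : nat} (phi : R -> \bar R) (gamma : R) (X : 'M[R]_n).

Definition tangent_cost : 'M[R]_n :=
  \matrix_(i, j) (\sum_k \sum_l `|gamma * dphi phi (X k l)|
                  - gamma * dphi phi (X i j)).

Lemma tangent_cost_ge0 : nonneg_mx tangent_cost.
Proof.
move=> i j; rewrite mxE subr_ge0; apply: le_trans (ler_norm _) _.
apply: le_trans (ler_sum_term j (fun l => normr_ge0 _)) _.
by apply: ler_sum_term => k; apply: sumr_ge0 => l _.
Qed.

Lemma objective_tangent_cost (Y : 'M[R]_n) :
  objective phi gamma tangent_cost Y =
  (((\sum_k \sum_l `|gamma * dphi phi (X k l)|) * \sum_i \sum_j Y i j
    + gamma * \sum_i \sum_j (phir phi (X i j) - dphi phi (X i j) * X i j))%:E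
   + gamma%:E * \sum_i \sum_j bregman_div phi (X i j) (Y i j))%E.
Proof.
have phiYE : (\sum_i \sum_j phi (Y i j) =
    (\sum_i \sum_j tangent phi (X i j) (Y i j))%:E
    + \sum_i \sum_j bregman_div phi (X i j) (Y i j))%E.
  rewrite -sumEFin -big_split; apply: eq_bigr => i _ /=.
  by rewrite -sumEFin -big_split; apply: eq_bigr => j _; exact/esym/bregman_divK.
rewrite /objective phiYE muleDr // -EFinM addeA -EFinD; congr (_%:E + _)%E.
rewrite !mulr_sumr -!big_split; apply: eq_bigr => i _ /=.
rewrite !mulr_sumr -!big_split; apply: eq_bigr => j _ /=.
rewrite mxE /tangent; ring.
Qed.

Lemma sum_bregman_div_eq0 (Y : 'M[R]_n) : bregman_assumption phi ->
  (forall i j, interior (edom phi) (X i j)) ->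
  (\sum_i \sum_j bregman_div phi (X i j) (Y i j) = 0)%E -> Y = X.
Proof.
move=> phiB Xint /eqP D0; apply/matrixP => i j.
apply/(bregman_div_eq0 _ phiB (Xint i j)); apply/eqP.
have Dge0 k l : (0 <= bregman_div phi (X k l) (Y k l))%E.
  exact: bregman_div_ge0.
move: D0; rewrite seq_psume_eq0 => [/allP/(_ i (mem_index_enum _)) /=|k _].
  by rewrite seq_psume_eq0 // => /allP/(_ j (mem_index_enum _)).
exact: sume_ge0.
Qed.

Lemma is_F_tangent_cost (mu nu : 'I_n -> R) : bregman_assumption phi ->
  0 < gamma -> (forall i j, interior (edom phi) (X i j)) ->
  transport_polytope mu nu X -> is_F phi gamma mu nu tangent_cost X.
Proof.
move=> phiB gamma0 Xint XP.
set K := (\sum_k \sum_l `|gamma * dphi phi (X k l)|) * \sum_i mu i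
  + gamma * \sum_i \sum_j (phir phi (X i j) - dphi phi (X i j) * X i j).
have objE Y : transport_polytope mu nu Y -> objective phi gamma tangent_cost Y =
    (K%:E + gamma%:E * \sum_i \sum_j bregman_div phi (X i j) (Y i j))%E.
  by move=> YP; rewrite objective_tangent_cost (transport_polytope_mass YP).
have objX : objective phi gamma tangent_cost X = K%:E.
  rewrite objE // big1 ?mule0 ?adde0 // => i _; rewrite big1 // => j _.
  exact/(bregman_div_eq0 _ phiB (Xint i j)).
have Dge0 Y : (0 <= \sum_i \sum_j bregman_div phi (X i j) (Y i j))%E.
  by apply: sume_ge0 => i _; apply: sume_ge0 => j _; exact: bregman_div_ge0.
split=> //; split=> [Y YP|Y YP Ymin].
  by rewrite objX objE // leeDl // mule_ge0 // lee_fin ltW.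
apply: sum_bregman_div_eq0 => //; apply/le_anti; rewrite Dge0 andbT.
have := Ymin X XP; rewrite objX objE // -[leRHS]adde0 leeD2lE //.
by rewrite pmule_rle0 ?lte_fin.
Qed.

End TangentCost.

Theorem proposition1 (R : realType) (n : nat) (mu nu : 'I_n -> R)
  (gamma : R) (phi : R -> \bar R) :
  (0 < n)%N -> prob_vec mu -> prob_vec nu -> 0 < gamma ->
  bregman_assumption phi ->
  forall Xhat : 'M[R]_n, target_set phi mu nu Xhat ->
  exists C : 'M[R]_n, nonneg_mx C /\ is_F phi gamma mu nu C Xhat.
Proof.
move=> _ muP _ gamma0 phiB X XT; exists (tangent_cost phi gamma X).
split; first exact: tangent_cost_ge0.
apply: is_F_tangent_cost => //; last by case: XT.
exact: target_set_interior phiB muP XT.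
Qed.
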